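(* Let $(G,G_+,\Sigma)$ be a scaled ordered abelian group such that $(G,G_+)$ is weakly unperforated, and suppose that $n\,\hat{\cdot}\,\Sigma=G_+$ for some $n\in\mathbb{N}$. Then $\Sigma=G_+$.
   Context: A scaled ordered abelian group is a triple $(G,G_+,\Sigma)$ where $(G,G_+)$ is an ordered abelian group and $\Sigma\subseteq G_+$ satisfies: (i) for all $x_1,x_2\in\Sigma$ there is $x\in\Sigma$ with $x_1\le x$, $x_2\le x$; (ii) if $x\in G_+$, $y\in\Sigma$ and $x\le y$ then $x\in\Sigma$; (iii) for every $x\in G_+$ there are $y\in\Sigma$ and $k\in\mathbb{N}$ with $x\le ky$. For such $\Sigma$, $n\,\hat{\cdot}\,\Sigma$ denotes the set of $y\in G_+$ such that $0\le y\le nx$ for some $x\in\Sigma$. An ordered abelian group $(G,G_+)$ is weakly unperforated if (i) whenever $x\in G$, $m\in\mathbb{N}$ and $mx\in G_+$, there is a torsion element $t$ with $x+t\in G_+$ and $mt=0$; and (ii) whenever $y\in G_+$, $t$ is torsion, $n\in\mathbb{N}$ and $ny+t\in G_+$, then $y\pm t\in G_+$. *)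

From HB Require Import structures.
From mathcomp Require Import all_boot all_algebra.
Set Implicit Arguments. Unset Strict Implicit. Unset Printing Implicit Defensive.
Import GRing.Theory.
Local Open Scope ring_scope.

Definition ordered_group (G : zmodType) (Gp : G -> Prop) : Prop :=
  [/\ Gp 0,
      (forall x y, Gp x -> Gp y -> Gp (x + y)) &
      (forall x, Gp x -> Gp (- x) -> x = 0)].

Definition gle (G : zmodType) (Gp : G -> Prop) (x y : G) : Prop := Gp (y - x).

Definition is_scale (G : zmodType) (Gp : G -> Prop) (S : G -> Prop) : Prop :=
  [/\ (forall x, S x -> Gp x),
      (forall x1 x2, S x1 -> S x2 ->
          exists x, [/\ S x, gle Gp x1 x & gle Gp x2 x]),
      (forall x y, Gp x -> S y -> gle Gp x y -> S x) &
      (forall x, Gp x -> exists y k, S y /\ gle Gp x (y *+ k))].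

Definition scaled_ordered_group (G : zmodType) (Gp S : G -> Prop) : Prop :=
  ordered_group Gp /\ is_scale Gp S.

Definition hat_mul (G : zmodType) (Gp : G -> Prop) (n : nat) (S : G -> Prop)
  : G -> Prop :=
  fun y => Gp y /\ exists x, S x /\ gle Gp 0 y /\ gle Gp y (x *+ n).

Definition torsion (G : zmodType) (t : G) : Prop :=
  exists k : nat, (0 < k)%N /\ t *+ k = 0.

Definition weakly_unperforated (G : zmodType) (Gp : G -> Prop) : Prop :=
  (forall (x : G) (m : nat), (0 < m)%N -> Gp (x *+ m) ->
     exists t, [/\ torsion t, Gp (x + t) & t *+ m = 0]) /\
  (forall (y t : G) (n : nat), Gp y -> torsion t -> (0 < n)%N ->
     Gp (y *+ n + t) -> Gp (y + t) /\ Gp (y - t)).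

From mathcomp Require Import all_boot all_algebra.
Import GRing.Theory.
Local Open Scope ring_scope.

(* Given x >= 0, pick s in the scale with n x <= n s.  Weak unperforation
   turns this into x <= s + t for a torsion t, and then s - t >= 0 too.  The
   element n s - t is positive, hence below n s2 for some s2 in the scale;
   an upper bound s' of s and s2 in the scale satisfies n (s' - s) + t >= 0,
   so weak unperforation again gives s + t <= s'.  Thus x <= s', and x lies
   in the scale because the scale is hereditary. *)

Section OrderedGroup.

Context {G : zmodType} {Gp : G -> Prop}.
Hypothesis ordG : ordered_group Gp.

Lemma gle0x {x : G} : gle Gp 0 x <-> Gp x.
Proof. by rewrite /gle subr0. Qed.

Lemma gle_trans {x y z : G} : gle Gp x y -> gle Gp y z -> gle Gp x z.
Proof.
case: ordG => _ addG _ xy yz.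
by rewrite /gle -[z](subrK y) -addrA; apply: addG.
Qed.

Lemma pos_mulrn {x : G} (k : nat) : Gp x -> Gp (x *+ k).
Proof.
case: ordG => G0 addG _ Gx; elim: k => [|k IHk]; first by rewrite mulr0n.
by rewrite mulrS; apply: addG.
Qed.

Lemma gle_mulrn {x y : G} (k : nat) : gle Gp x y -> gle Gp (x *+ k) (y *+ k).
Proof. by rewrite /gle -mulrnBl; apply: pos_mulrn. Qed.

Hypothesis wuG : weakly_unperforated Gp.

Lemma wu_le_mulrn {x y : G} {m : nat} : (0 < m)%N ->
  gle Gp (x *+ m) (y *+ m) -> exists2 t, torsion t & gle Gp x (y + t).
Proof.
case: wuG => wu1 _ m_gt0; rewrite /gle -mulrnBl => /(wu1 _ _ m_gt0).
by case=> t [tor_t Gyxt _]; exists t; rewrite // addrAC.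
Qed.

Lemma wu_sub_torsion {y t : G} {m : nat} : Gp y -> torsion t -> (0 < m)%N ->
  Gp (y *+ m + t) -> Gp (y - t).
Proof. by case: wuG => _ wu2 Gy tor_t m_gt0 /(wu2 _ _ _ Gy tor_t m_gt0) []. Qed.

Context {S : G -> Prop} {n : nat}.
Hypotheses (scaleS : is_scale Gp S) (n_gt0 : (0 < n)%N).
Hypothesis pos_hatS : forall y, Gp y -> hat_mul Gp n S y.

Lemma pos_le_scale_mulrn {y : G} : Gp y -> exists2 s, S s & gle Gp y (s *+ n).
Proof. by move=> /pos_hatS [_ [s [Ss [_ ysn]]]]; exists s. Qed.

Lemma scale_absorbs_torsion {s t : G} : S s -> torsion t -> Gp (s - t) ->
  exists2 s', S s' & gle Gp (s + t) s'.
Proof.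
case: scaleS => posS dirS _ _ Ss tor_t Gst.
have Gsnt : Gp (s *+ n - t).
  case: ordG => _ addG _; rewrite -(prednK n_gt0) mulrSr -addrA.
  exact/addG/Gst/pos_mulrn/posS.
have [s2 Ss2 sns2] := pos_le_scale_mulrn Gsnt.
have [s' [Ss' ss' s2s']] := dirS _ _ Ss Ss2.
have Gss't : Gp ((s' - s) *+ n + t).
  have := gle_trans sns2 (gle_mulrn n s2s').
  by rewrite /gle opprB addrA addrAC -mulrnBl.
exists s' => //; rewrite /gle opprD addrA.
exact: wu_sub_torsion ss' tor_t n_gt0 Gss't.
Qed.

End OrderedGroup.

Theorem proposition1p10 (G : zmodType) (Gp S : G -> Prop) :
  scaled_ordered_group Gp S ->
  weakly_unperforated Gp ->
  (exists n : nat, (0 < n)%N /\ (forall y, hat_mul Gp n S y <-> Gp y)) ->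
  forall x, S x <-> Gp x.
Proof.
move=> [ordG scaleS] wuG [n [n_gt0 hatS]] x.
have pos_hatS y : Gp y -> hat_mul Gp n S y by move/hatS.
have [posS _ heredS _] := scaleS.
split=> [/posS // | Gx].
have [s Ss xsn] := pos_le_scale_mulrn pos_hatS (pos_mulrn ordG n Gx).
have [t tor_t xst] := wu_le_mulrn wuG n_gt0 xsn.
have Gst : Gp (s + t) by apply/gle0x/(gle_trans ordG _ xst)/gle0x.
have Gsmt := wu_sub_torsion wuG (posS s Ss) tor_t (isT : 0 < 1)%N Gst.
have [s' Ss' sts'] := scale_absorbs_torsion ordG wuG scaleS n_gt0 pos_hatS Ss tor_t Gsmt.
exact: heredS x s' Gx Ss' (gle_trans ordG xst sts').
Qed.
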